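(* For the problem $P2\|C_{\max}$ with $n$ jobs, starting from any schedule, the total number of improving iterations (each replacing the current schedule by an improving 2-swap neighbor) before a 2-swap optimal solution is reached is $O(n^4)$.
   Context: Problem $P2\|C_{\max}$: $n$ jobs with processing times $p_j>0$, two identical machines. A schedule $\sigma=(M_1,M_2)$ partitions the jobs into the sets processed on machines 1 and 2; loads $L_i=\sum_{j\in M_i}p_j$, makespan $\max_iL_i$. A 2-swap neighbor is obtained by choosing $k'$ jobs on one machine and $k''$ jobs on the other with $k'+k''\le 2$ and interchanging their machine assignments (so it covers moving one job, moving two jobs, or exchanging two jobs on different machines). It is improving if its makespan is strictly smaller than the current makespan. A schedule is 2-swap optimal if it has no improving 2-swap neighbor. *)

From mathcomp Require Import all_boot all_order all_algebra.
Set Implicit Arguments. Unset Strict Implicit. Unset Printing Implicit Defensive.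
Import Order.TTheory GRing.Theory Num.Theory.
Local Open Scope ring_scope.

(* A schedule of n jobs on two identical machines: job j is on machine 1
   iff sigma j = true, and on machine 2 iff sigma j = false. *)
Definition schedule (n : nat) := {ffun 'I_n -> bool}.

Section P2Cmax.
Variables (R : realFieldType) (n : nat) (p : 'I_n -> R).

Definition load (sigma : schedule n) (b : bool) : R :=
  \sum_(j < n | sigma j == b) p j.

Definition makespan (sigma : schedule n) : R :=
  Num.max (load sigma true) (load sigma false).

Definition swap_set (sigma : schedule n) (S : {set 'I_n}) : schedule n :=
  [ffun j => if j \in S then ~~ sigma j else sigma j].

(* 2-swap neighbor: choose k' jobs on one machine and k'' on the other with
   k' + k'' <= 2 (i.e. a set S of at most 2 jobs) and interchange them. *)
Definition two_swap_neighbor (sigma sigma' : schedule n) : Prop :=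
  exists S : {set 'I_n}, (#|S| <= 2)%N /\ sigma' = swap_set sigma S.

Definition improving_two_swap (sigma sigma' : schedule n) : Prop :=
  two_swap_neighbor sigma sigma' /\ makespan sigma' < makespan sigma.

Definition two_swap_optimal (sigma : schedule n) : Prop :=
  forall sigma', ~ improving_two_swap sigma sigma'.

End P2Cmax.

(* Since the total load is fixed, the makespan is (total + |D|)/2 for the
   imbalance D = L1 - L2, so an improving swap of a set S strictly decreases
   |D|, replacing D by D - 2e, where e is the signed processing time of S.
   Consider the lexicographic potential (A, r): A counts the signed sums of at
   most two processing times (at most (2n+1)^2 of them) of absolute value
   below |D|, and r is the sum of the ranks (positions in the order of
   processing times) of the jobs on the critical machine (at most n^2).
   A never grows.  If the critical machine stays the same, the swap moves more
   processing time off it than onto it, hence jobs of higher rank, so r drops.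
   If the critical machine changes, the swap's own e is counted before but
   |D - 2e| <= |e| afterwards, so A drops.  The potential is O(n^4). *)
From mathcomp Require Import all_boot all_order all_algebra.
From mathcomp Require Import zify ring lra.
Import Order.TTheory GRing.Theory Num.Theory.
Set Implicit Arguments. Unset Strict Implicit.
Local Open Scope ring_scope.

Lemma decreasing_chain_length (f : nat -> nat) (k : nat) :
  (forall i, (i < k)%N -> (f i.+1 < f i)%N) -> (k <= f 0)%N.
Proof.
move=> decr; suff: (k + f k <= f 0)%N by apply: leq_trans; apply: leq_addr.
elim: k decr => [|k IHk] decr //.
have := decr k (ltnSn k); have := IHk (fun i lt_ik => decr i (ltnW lt_ik)).
lia.
Qed.

Lemma lex_potential_lt (m a a' b b' : nat) :
  (a' <= a)%N -> (b' <= m)%N -> (a' < a)%N \/ (b' < b)%N ->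
  (a' * m.+1 + b' < a * m.+1 + b)%N.
Proof.
move=> le_a le_b [lt_a | lt_b].
- have : (a'.+1 * m.+1 <= a * m.+1)%N by rewrite leq_mul2r lt_a orbT.
  rewrite mulSn; lia.
- have : (a' * m.+1 <= a * m.+1)%N by rewrite leq_mul2r le_a orbT.
  lia.
Qed.

Lemma card_le2P (T : finType) (S : {set T}) : (#|S| <= 2)%N ->
  [\/ S = set0, exists a, S = [set a] | exists a b, a != b /\ S = [set a; b]].
Proof.
case: (ltngtP #|S| 1) => card_S le_S2.
- by apply: Or31; apply: cards0_eq; lia.
- by apply: Or33; apply/cards2P; apply/eqP; lia.
- by apply: Or32; apply/cards1P/eqP.
Qed.

Section Imbalance.
Variable R : realFieldType.
Implicit Types D e : R.

Lemma normr_cases (x : R) : (0 <= x /\ `|x| = x) \/ (x < 0 /\ `|x| = - x).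
Proof.
case: (lerP 0 x) => x_sign; [left | right]; split => //.
- exact: ger0_norm.
- exact: ltr0_norm.
Qed.

Local Ltac norm_cases x := case: (normr_cases x) => [[? ->] | [? ->]].

Lemma max_lt_norm_subr_lt (a b a' b' : R) : a + b = a' + b' ->
  Num.max a' b' < Num.max a b -> `|a' - b'| < `|a - b|.
Proof.
rewrite !maxEle; case: ifP => ?; case: ifP => ?;
  norm_cases (a - b); norm_cases (a' - b'); lra.
Qed.

Lemma improving_transfer_pos D e : `|D - 2 * e| < `|D| ->
  0 < (if 0 < D then e else - e).
Proof. case: (lerP D 0) => ? /=; norm_cases D; norm_cases (D - 2 * e); lra. Qed.

Lemma improving_transfer_lt D e : `|D - 2 * e| < `|D| -> `|e| < `|D|.
Proof. norm_cases D; norm_cases (D - 2 * e); norm_cases e; lra. Qed.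

Lemma improving_sign_change D e : `|D - 2 * e| < `|D| ->
  (0 < D) != (0 < D - 2 * e) -> `|D - 2 * e| <= `|e|.
Proof.
case: (lerP D 0) => ?; case: (lerP (D - 2 * e) 0) => ? //=;
  norm_cases D; norm_cases (D - 2 * e); norm_cases e; move=> *; lra.
Qed.

End Imbalance.

Section TwoSwap.
Variables (R : realFieldType) (n : nat) (p : 'I_n -> R).
Hypothesis p_gt0 : forall j, 0 < p j.
Implicit Types (s : schedule n) (S : {set 'I_n}).

Definition imbalance s : R := load p s true - load p s false.

Definition signed_time s j : R := if s j then p j else - p j.

Definition transfer s S : R := \sum_(j in S) signed_time s j.

Lemma load_total s : load p s true + load p s false = \sum_j p j.
Proof.
rewrite /load [RHS](bigID (fun j => s j == true)) /=; congr (_ + _).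
by apply: eq_bigl => j; case: (s j).
Qed.

Lemma imbalance_sum s : imbalance s = \sum_j signed_time s j.
Proof.
rewrite /imbalance /load !(big_mkcond (fun j => s j == _)) -sumrB.
by apply: eq_bigr => j _; rewrite /signed_time; case: (s j); rewrite ?subr0 ?sub0r.
Qed.

Lemma imbalance_swap s S :
  imbalance (swap_set s S) = imbalance s - 2 * transfer s S.
Proof.
rewrite !imbalance_sum /transfer (bigID [in S]) [in RHS](bigID [in S]) /=.
have -> : \sum_(j in S) signed_time (swap_set s S) j = - \sum_(j in S) signed_time s j.
  rewrite -sumrN; apply: eq_bigr => j jS.
  by rewrite /signed_time ffunE jS; case: (s j); rewrite ?opprK.
have -> : \sum_(j | j \notin S) signed_time (swap_set s S) j =
          \sum_(j | j \notin S) signed_time s j.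
  by apply: eq_bigr => j jNS; rewrite /signed_time ffunE (negbTE jNS).
ring.
Qed.

Lemma improving_imbalance s S : makespan p (swap_set s S) < makespan p s ->
  `|imbalance s - 2 * transfer s S| < `|imbalance s|.
Proof.
by rewrite -imbalance_swap; apply: max_lt_norm_subr_lt; rewrite !load_total.
Qed.

Lemma transfer_from (c : bool) s S :
  \sum_(j in S) (if s j == c then p j else - p j) =
  if c then transfer s S else - transfer s S.
Proof.
rewrite /transfer; case: c; last rewrite -sumrN; apply: eq_bigr => j _;
  by rewrite /signed_time; case: (s j); rewrite ?opprK.
Qed.

Definition rank j : nat := #|[set i | p i <= p j]|.

Lemma rank_lt i j : p i < p j -> (rank i < rank j)%N.
Proof.
move=> lt_ij; apply: proper_card; apply/properP; split.
  by apply/subsetP => x; rewrite !inE => le_xi; apply: le_trans le_xi (ltW lt_ij).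
by exists j; rewrite !inE ?lexx // -ltNge.
Qed.

Lemma rank_gt0 j : (0 < rank j)%N.
Proof. by apply/card_gt0P; exists j; rewrite inE. Qed.

Lemma rank_le j : (rank j <= n)%N.
Proof. by rewrite /rank -[X in (_ <= X)%N]card_ord max_card. Qed.

Lemma rank_sum_lt (q : pred 'I_n) S : (#|S| <= 2)%N ->
  0 < \sum_(j in S) (if q j then p j else - p j) ->
  (\sum_(j in S) (if q j then 0 else rank j) <
   \sum_(j in S) (if q j then rank j else 0))%N.
Proof.
case/card_le2P => [-> | [a ->] | [a [b [neq_ab ->]]]].
- by rewrite !big_set0 ltxx.
- rewrite !big_set1; case: (q a) => time_pos; first exact: rank_gt0.
  by have := p_gt0 a; lra.
- have a_notin_b : a \notin [set b] by rewrite inE.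
  rewrite !big_setU1 //= !big_set1.
  case: (q a); case: (q b) => time_pos.
  + by have := rank_gt0 a; lia.
  + by rewrite add0n addn0; apply: rank_lt; lra.
  + by rewrite add0n addn0; apply: rank_lt; lra.
  + by have := p_gt0 a; have := p_gt0 b; lra.
Qed.

Definition rank_sum (c : bool) s : nat := \sum_j (if s j == c then rank j else 0).

Lemma rank_sum_le c s : (rank_sum c s <= n ^ 2)%N.
Proof.
rewrite /rank_sum -mulnn -[X in (X * _)%N]card_ord -sum_nat_const.
by apply: leq_sum => j _; case: ifP => _ //; apply: rank_le.
Qed.

Lemma rank_sum_swap c s S :
  (rank_sum c (swap_set s S) + \sum_(j in S) (if s j == c then rank j else 0) =
   rank_sum c s + \sum_(j in S) (if s j == c then 0 else rank j))%N.
Proof.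
rewrite /rank_sum (bigID [in S] xpredT) [in RHS](bigID [in S] xpredT) /=.
have -> : (\sum_(j in S) (if swap_set s S j == c then rank j else 0) =
           \sum_(j in S) (if s j == c then 0 else rank j))%N.
  by apply: eq_bigr => j jS; rewrite ffunE jS; case: (s j); case: c.
have -> : (\sum_(j | j \notin S) (if swap_set s S j == c then rank j else 0) =
           \sum_(j | j \notin S) (if s j == c then rank j else 0))%N.
  by apply: eq_bigr => j jNS; rewrite ffunE (negbTE jNS).
ring.
Qed.

Lemma rank_sum_swap_lt c s S : (#|S| <= 2)%N ->
  0 < \sum_(j in S) (if s j == c then p j else - p j) ->
  (rank_sum c (swap_set s S) < rank_sum c s)%N.
Proof.
move=> card_S time_pos.
have := rank_sum_lt card_S time_pos; have := rank_sum_swap c s S; lia.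
Qed.


(* [None] stands for no job, [Some (j, b)] for job [j] counted with sign [b]. *)
Definition signed_job_time (o : option ('I_n * bool)) : R :=
  if o is Some (j, b) then (if b then p j else - p j) else 0.

Definition two_job_sum (x : option ('I_n * bool) * option ('I_n * bool)) : R :=
  signed_job_time x.1 + signed_job_time x.2.

Definition small_sums s := [set x | `|two_job_sum x| < `|imbalance s|].

Lemma transfer_two_job_sum s S : (#|S| <= 2)%N ->
  exists x, two_job_sum x = transfer s S.
Proof.
rewrite /two_job_sum /transfer; case/card_le2P => [-> | [a ->] | [a [b [neq_ab ->]]]].
- by exists (None, None); rewrite big_set0 /= addr0.
- by exists (Some (a, s a), None); rewrite big_set1 /= addr0.
- have a_notin_b : a \notin [set b] by rewrite inE.
  by exists (Some (a, s a), Some (b, s b)); rewrite big_setU1 //= big_set1.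
Qed.

Lemma card_small_sums s : (#|small_sums s| <= 9 * n ^ 2)%N.
Proof.
have [n0 | n_gt0] := posnP n.
  suff -> : small_sums s = set0 by rewrite cards0.
  apply/setP => x; rewrite !inE imbalance_sum big1 ?normr0 ?ltNge ?normr_ge0 // => j.
  by have := ltn_ord j; rewrite [X in (_ < X)%N]n0.
apply: leq_trans (max_card _) _.
rewrite card_prod !card_option card_prod card_ord card_bool; nia.
Qed.

Definition critical s := 0 < imbalance s.

Definition potential s : nat :=
  #|small_sums s| * (n ^ 2).+1 + rank_sum (critical s) s.

Lemma potential_le s : (potential s <= 19 * n ^ 4)%N.
Proof.
have := card_small_sums s; have := rank_sum_le (critical s) s.
rewrite /potential; nia.
Qed.

Lemma potential_improving_lt s s' :
  improving_two_swap p s s' -> (potential s' < potential s)%N.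
Proof.
case=> [[S [card_S ->]] lt_makespan].
set D := imbalance s; set e := transfer s S.
have improving : `|D - 2 * e| < `|D| by apply: improving_imbalance.
have imbalance' : imbalance (swap_set s S) = D - 2 * e by apply: imbalance_swap.
have [x sum_x] := transfer_two_job_sum s card_S.
have small_sums_sub : small_sums (swap_set s S) \subset small_sums s.
  by apply/subsetP => y; rewrite !inE imbalance' => /lt_trans; apply.
apply: lex_potential_lt; [exact: subset_leq_card | exact: rank_sum_le |].
have [same_critical | new_critical] := eqVneq (critical (swap_set s S)) (critical s).
- right; rewrite same_critical; apply: rank_sum_swap_lt => //.
  by rewrite transfer_from; apply: improving_transfer_pos.
- left; apply/proper_card/properP; split => //; exists x.
    by rewrite inE sum_x; apply: improving_transfer_lt.
  rewrite inE imbalance' sum_x -leNgt; apply: improving_sign_change => //.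
  by rewrite eq_sym -imbalance'.
Qed.

End TwoSwap.

Theorem theorem4 :
  exists C : nat,
  forall (R : realFieldType) (n : nat) (p : 'I_n -> R),
    (forall j, 0 < p j) ->
    forall (s : nat -> schedule n) (k : nat),
      (forall i, (i < k)%N -> improving_two_swap p (s i) (s i.+1)) ->
      (k <= C * n ^ 4)%N.
Proof.
exists 19%N => R n p p_gt0 s k improving.
apply: leq_trans _ (potential_le p (s 0)).
apply: (@decreasing_chain_length (fun i => potential p (s i))) => i lt_ik.
exact: potential_improving_lt p_gt0 _ _ (improving i lt_ik).
Qed.
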